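(* Assume the Erdős girth conjecture: for every integer $k\ge1$ there are infinitely many $\eta$ for which there exists a graph on $\eta$ vertices with girth $2k+2$ and $\Omega(\eta^{1+1/k})$ edges. Then for every integer $k\ge1$ there are infinitely many $n$ for which there exist an undirected graph $G'$ on $n$ vertices with nonnegative edge weights and a vertex $s$ such that every $f$-EFT $\sigma$-ASPT of $G'$ rooted at $s$ with $f\ge\log n$ and $\sigma<\frac{3k+1}{k+1}$ has $\Omega(n^{1+1/k})$ edges.
   Context: For a weighted graph $G'=(V,E,w)$ with source $s$, an $f$-EFT $\sigma$-ASPT of $G'$ rooted at $s$ is a spanning subgraph $H$ of $G'$ such that for every $F\subseteq E$ with $|F|\le f$ and every vertex $t$, $d_{H-F}(t)\le\sigma\,d_{G'-F}(t)$, where $X-F$ is $X$ with the edges of $F$ removed and $d_X(t)$ is the shortest-path distance from $s$ to $t$ in $X$. Logarithms are base $2$. *)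

From HB Require Import structures.
From mathcomp Require Import all_boot all_order all_algebra.
From mathcomp Require Import all_classical all_reals ereal exp.
Set Implicit Arguments. Unset Strict Implicit. Unset Printing Implicit Defensive.
Import Order.TTheory GRing.Theory Num.Theory.
Local Open Scope ring_scope.

Definition log2 {R : realType} (x : R) : R := ln x / ln 2.

Definition simple_graph (n : nat) (E : {set {set 'I_n}}) : Prop :=
  forall e, e \in E -> #|e| = 2%N.

Definition has_cycle_of_length (n : nat) (E : {set {set 'I_n}}) (m : nat) : Prop :=
  exists p : seq 'I_n,
    [/\ size p = m, (3 <= m)%N, uniq p & cycle (fun u v => [set u; v] \in E) p].

Definition girth_eq (n : nat) (E : {set {set 'I_n}}) (g : nat) : Prop :=
  has_cycle_of_length E g /\ (forall m, (m < g)%N -> ~ has_cycle_of_length E m).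

(* Walks from s to t using edges of X (given as the list of vertices after s). *)
Definition is_walk (n : nat) (X : {set {set 'I_n}}) (s t : 'I_n) (p : seq 'I_n) : bool :=
  path (fun u v => [set u; v] \in X) s p && (last s p == t).

Definition walk_len {R : realType} (n : nat) (w : {set 'I_n} -> R) (s : 'I_n)
  (p : seq 'I_n) : R :=
  \sum_(e <- pairmap (fun u v => [set u; v]) s p) w e.

(* Shortest-path distance from s to t in the graph with edge set X and
   weights w; +oo if t is unreachable. *)
Definition dist {R : realType} (n : nat) (X : {set {set 'I_n}}) (w : {set 'I_n} -> R)
  (s t : 'I_n) : \bar R :=
  ereal_inf [set (walk_len w s p)%:E | p in [set p | is_walk X s t p]]%classic.

Definition is_EFT_ASPT {R : realType} (n : nat) (E : {set {set 'I_n}})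
  (w : {set 'I_n} -> R) (s : 'I_n) (f : nat) (sigma : R) (H : {set {set 'I_n}}) : Prop :=
  H \subset E /\
  forall F : {set {set 'I_n}}, F \subset E -> (#|F| <= f)%N ->
    forall t : 'I_n, (dist (H :\: F) w s t <= sigma%:E * dist (E :\: F) w s t)%E.

Definition erdos_girth_conjecture (R : realType) (k : nat) : Prop :=
  exists c : R, 0 < c /\
    forall N : nat, exists eta : nat, (N <= eta)%N /\
      exists E : {set {set 'I_eta}},
        [/\ simple_graph E, girth_eq E (2 * k + 2)%N &
            c * powR (eta%:R) (1 + k%:R^-1) <= #|E|%:R].

From HB Require Import structures.
From mathcomp Require Import all_boot all_order all_algebra.
From mathcomp Require Import all_classical all_reals ereal exp.
From mathcomp Require Import fintype finset zify lra.
Import Order.TTheory GRing.Theory Num.Theory.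
Set Implicit Arguments. Unset Strict Implicit. Unset Printing Implicit Defensive.

(* Hang a copy of an extremal graph G0 of girth 2k+2 on the leaves of a complete
   binary tree rooted at s, with weight 0 on internal tree edges, k on tree edges
   into a leaf and 1 on the copied edges. For a copied edge a0 b0, let F be the
   d <= log n tree edges hanging off the path from s to a0. In G' - F the vertex b0
   is at distance k + 1 (down to a0, then across a0 b0), while every walk of G' - F
   avoiding a0 b0 costs at least 3k + 1: this is witnessed by the potential that is
   0 on the path from s to a0, 2k + 1 on all other internal vertices, and
   k + min(2k + 1, dist_{G0 - a0b0}(a0, v)) on a leaf v. No surviving edge other
   than a0 b0 raises it by more than its weight, and by the girth assumption it is
   3k + 1 at b0. Hence a spanner of stretch below (3k+1)/(k+1) keeps every copied
   edge, and G0 has Omega(n^(1+1/k)) edges. *)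

Definition adj (n : nat) (X : {set {set 'I_n}}) : rel 'I_n :=
  fun u v => [set u; v] \in X.

Lemma adjC (n : nat) (X : {set {set 'I_n}}) u v : adj X u v = adj X v u.
Proof. by rewrite /adj setUC. Qed.

Lemma set2_eq_cases (T : finType) (u v x y : T) :
  [set u; v] = [set x; y] -> (u = x /\ v = y) \/ (u = y /\ v = x).
Proof.
move=> uv_xy.
have: u \in [set x; y] by rewrite -uv_xy set21.
have: v \in [set x; y] by rewrite -uv_xy set22.
have: x \in [set u; v] by rewrite uv_xy set21.
have: y \in [set u; v] by rewrite uv_xy set22.
by move=> /set2P[] e1 /set2P[] e2 /set2P[] e3 /set2P[] e4; subst; auto.
Qed.

Section Potential.
Local Open Scope ring_scope.
Variables (R : realType) (n : nat) (X : {set {set 'I_n}}) (w : {set 'I_n} -> R).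

Lemma dist_le_walk_len s t p : is_walk X s t p -> (dist X w s t <= (walk_len w s p)%:E)%E.
Proof. by move=> st_p; apply: ereal_inf_lbound; exists p. Qed.

Variable phi : 'I_n -> R.
Hypothesis phi_lip : forall u v, adj X u v -> phi v <= phi u + w [set u; v].

Lemma potential_le_walk_len s p :
  path (adj X) s p -> phi (last s p) - phi s <= walk_len w s p.
Proof.
elim: p s => [|v p IHp] s /=; first by rewrite subrr /walk_len big_nil.
move=> /andP[sv vp]; rewrite /walk_len big_cons -/(walk_len w v p).
have := IHp v vp; have := phi_lip sv; lra.
Qed.

Lemma potential_le_dist s t : ((phi t - phi s)%:E <= dist X w s t)%E.
Proof.
apply/ereal_infP => _ [p /andP[sp /eqP <-] <-].
by rewrite lee_fin potential_le_walk_len.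
Qed.
End Potential.

Section CappedHops.
Variables (T : finType) (e : rel T) (a : T) (K : nat).

Definition reachable_within (m : nat) (x : T) : Prop :=
  exists p, [/\ size p <= m, path e a p & last a p = x].

Lemma capped_hops_subproof x : exists m, `[< reachable_within m x >] || (m == K).
Proof. by exists K; rewrite eqxx orbT. Qed.

(* min(K, e-distance from a to x) *)
Definition capped_hops x : nat := ex_minn (capped_hops_subproof x).

Lemma capped_hops_le x : capped_hops x <= K.
Proof. by rewrite /capped_hops; case: ex_minnP => m _; apply; rewrite eqxx orbT. Qed.

Lemma capped_hops_source : capped_hops a = 0.
Proof.
rewrite /capped_hops; case: ex_minnP => m _ min_m; apply/eqP; rewrite -leqn0.
by apply: min_m; apply/orP; left; apply/asboolP; exists [::].
Qed.

Lemma capped_hops_gt0 x : 0 < K -> x != a -> 0 < capped_hops x.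
Proof.
move=> K_gt0 xa; rewrite /capped_hops; case: ex_minnP => -[|m] // + _.
case/orP => [/asboolP [[|? ?] [] //= _ _ x_a]|/eqP K0]; last by rewrite -K0 in K_gt0.
by rewrite x_a eqxx in xa.
Qed.

Lemma capped_hops_step x y : e x y -> capped_hops y <= (capped_hops x).+1.
Proof.
move=> exy; rewrite {2}/capped_hops; case: ex_minnP => m + _.
case/orP => [/asboolP [p [sp pp lp]]|/eqP ->]; last exact: leqW (capped_hops_le y).
rewrite /capped_hops; case: ex_minnP => m' _; apply; apply/orP; left; apply/asboolP.
exists (rcons p y); split; first by rewrite size_rcons.
  by rewrite rcons_path pp lp.
by rewrite last_rcons.
Qed.

Lemma capped_hops_far x :
  (forall p, path e a p -> last a p = x -> K <= size p) -> capped_hops x = K.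
Proof.
move=> far; apply/eqP; rewrite eqn_leq capped_hops_le /= /capped_hops.
case: ex_minnP => m + _; case/orP => [/asboolP [p [sp pp lp]]|/eqP -> //].
exact: leq_trans (far p pp lp) sp.
Qed.
End CappedHops.

Lemma girth_le_detour (n g : nat) (E : {set {set 'I_n}}) (a b : 'I_n) p :
  girth_eq E g -> a != b -> [set a; b] \in E ->
  path (adj (E :\ [set a; b])) a p -> last a p = b -> g <= (size p).+1.
Proof.
move=> [_ no_short] ab abE ap_b.
case: (shortenP ap_b) => q aq_b uq sub_q qb.
have size_q : size q <= size p by apply: uniq_leq_size sub_q; case/andP: uq.
apply: (@leq_trans (size q).+1) => //; rewrite leqNgt; apply/negP => short.
apply: (no_short _ short); exists (a :: q); split => //.
- case: q aq_b qb {uq sub_q size_q short} => [|x [|y q]] //=.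
    by move=> _ ba; rewrite ba eqxx in ab.
  by rewrite /adj !inE andbT => /andP[/negP + _] xb; rewrite xb.
- rewrite /cycle rcons_path qb; apply/andP; split.
    by apply: sub_path aq_b => u v; rewrite /adj !inE => /andP[].
  by rewrite /adj setUC.
Qed.

Definition sibling (x : nat) : nat := if odd x then x.-1 else x.+1.

Lemma eq_sibling x y : x./2 = y./2 -> x != y -> x = sibling y.
Proof.
move=> xy_half xy; have ex := odd_double_half x; have ey := odd_double_half y.
rewrite xy_half in ex; rewrite /sibling; move: xy ex ey.
by case: (odd x); case: (odd y) => /=; rewrite -!mul2n => /eqP; lia.
Qed.

(* In the heap numbering of the complete binary tree of depth d (root 1, the parent
   of x is x./2, leaves 2^d <= x < 2^d.+1), the ancestors of the leaf a are the
   a %/ 2 ^ j for j <= d. *)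
Section RootPath.
Variables (d a : nat).
Hypotheses (d_gt0 : 0 < d) (leaf_a : 2 ^ d <= a) (a_lt : a < 2 ^ d.+1).

Lemma ancestor_ge j : j <= d -> 2 ^ (d - j) <= a %/ 2 ^ j.
Proof. by move=> jd; rewrite leq_divRL ?expn_gt0 // -expnD subnK. Qed.

Lemma ancestor_lt j : j <= d -> a %/ 2 ^ j < 2 ^ (d - j).+1.
Proof. by move=> jd; rewrite ltn_divLR ?expn_gt0 // -expnD addSn subnK. Qed.

Lemma ancestorS j : a %/ 2 ^ j.+1 = (a %/ 2 ^ j)./2.
Proof. by rewrite expnSr divnMA divn2. Qed.

Lemma ancestor_root : a %/ 2 ^ d = 1.
Proof.
by apply/eqP; have := ancestor_lt (leqnn d); have := ancestor_ge (leqnn d);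
  rewrite subnn expn0 expn1; lia.
Qed.

Lemma ancestor_internal j : 0 < j -> j <= d -> a %/ 2 ^ j < 2 ^ d.
Proof.
move=> j_gt0 jd; apply: leq_trans (ancestor_lt jd) _.
by rewrite leq_exp2l //; lia.
Qed.

Definition on_root_path (x : nat) : bool := [exists j : 'I_d.+1, x == a %/ 2 ^ j].

Lemma on_root_path_ancestor j : j <= d -> on_root_path (a %/ 2 ^ j).
Proof. by move=> jd; apply/existsP; exists (Ordinal (jd : j < d.+1)). Qed.

Lemma on_root_path_leaf : on_root_path a.
Proof. by have := on_root_path_ancestor (leq0n d); rewrite expn0 divn1. Qed.

Lemma on_root_path_root : on_root_path 1.
Proof. by rewrite -ancestor_root on_root_path_ancestor. Qed.

Lemma on_root_path_leafE x : 2 ^ d <= x -> on_root_path x -> x = a.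
Proof.
move=> leaf_x /existsP[[[|j] jd] /= /eqP x_eq]; first by rewrite x_eq expn0 divn1.
rewrite x_eq in leaf_x.
have := ancestor_lt (jd : j.+1 <= d); rewrite ltnNge => /negP; case.
by apply: leq_trans _ leaf_x; rewrite leq_exp2l //; lia.
Qed.

Lemma on_root_path_half z : on_root_path z -> 1 < z -> on_root_path z./2.
Proof.
move=> /existsP[[j jd] /= /eqP ->] z_gt1; rewrite -ancestorS on_root_path_ancestor //.
by rewrite ltn_neqAle -ltnS jd andbT; apply: contraTneq z_gt1 => ->; rewrite ancestor_root.
Qed.

Lemma off_root_path_child z : z < 2 ^ d.+1 -> 1 < z ->
  ~~ on_root_path z -> on_root_path z./2 ->
  exists j : 'I_d, z = sibling (a %/ 2 ^ j) /\ z./2 = a %/ 2 ^ j.+1.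
Proof.
move=> z_lt z_gt1 off_z /existsP[[[|j] jd] /= /eqP z_half].
  have : z./2 < 2 ^ d by rewrite ltn_half_double -mul2n -expnS.
  by rewrite z_half expn0 divn1 ltnNge leaf_a.
exists (Ordinal (jd : j < d)); split => //.
apply: eq_sibling; first by rewrite z_half ancestorS.
by apply: contraNneq off_z => ->; rewrite on_root_path_ancestor // ltnW.
Qed.
End RootPath.

Section Construction.
Variables (k d m eta : nat) (E0 : {set {set 'I_eta}}).
Hypotheses (d_gt0 : 0 < d) (card_V : m.+1 = 2 ^ d.+1) (eta_le : eta <= 2 ^ d)
  (E0_simple : simple_graph E0).

(* The vertex type is written 'I_m.+1 rather than 'I_(2 ^ d.+1) so that inord applies. *)
Local Notation V := 'I_m.+1.

Definition embed (v : 'I_eta) : V := inord (2 ^ d + v).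
Definition parent (x : V) : V := inord x./2.
Definition root : V := inord 1.

Definition tree_edges : {set {set V}} := [set [set x; parent x] | x : V & 1 < x].
Definition copy_edges : {set {set V}} := [set embed @: e | e : {set 'I_eta} in E0].
Definition construction_edges := tree_edges :|: copy_edges.

Definition leaves : {set V} := [set x : V | 2 ^ d <= x].
Definition construction_weight (e : {set V}) : nat :=
  if e \subset leaves then 1 else if [disjoint e & leaves] then 0 else k.

Lemma vertex_lt (x : V) : x < 2 ^ d.+1.
Proof. by rewrite -card_V. Qed.

Lemma embed_val v : embed v = 2 ^ d + v :> nat.
Proof.
rewrite inordK // card_V expnS mul2n -addnn ltn_add2l.
exact: leq_trans (ltn_ord v) eta_le.
Qed.

Lemma embed_inj : injective embed.
Proof. by move=> u v /(congr1 val); rewrite /= !embed_val => /addnI /val_inj. Qed.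

Lemma parent_val x : parent x = x./2 :> nat.
Proof.
rewrite inordK //; apply: leq_ltn_trans (ltn_ord x).
by have := odd_double_half x; rewrite -mul2n; lia.
Qed.

Lemma parent_lt (x : V) : x./2 < 2 ^ d.
Proof. by rewrite ltn_half_double -mul2n -expnS vertex_lt. Qed.

Lemma root_val : root = 1 :> nat.
Proof. by rewrite inordK // card_V -{1}(expn0 2) ltn_exp2l. Qed.

Lemma tree_edge_mem (z : V) : 1 < z -> [set z; parent z] \in construction_edges.
Proof. by move=> z_gt1; apply/setUP; left; apply/imsetP; exists z; rewrite ?inE. Qed.

Lemma copy_edge_mem (u v : 'I_eta) :
  [set u; v] \in E0 -> [set embed u; embed v] \in construction_edges.
Proof.
move=> uv_E0; apply/setUP; right; apply/imsetP.
by exists [set u; v]; rewrite ?imsetU1 ?imset_set1.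
Qed.

Lemma construction_simple : simple_graph construction_edges.
Proof.
move=> e /setUP[/imsetP[x /[!inE] x_gt1 ->]|/imsetP[e0 e0E ->]].
  rewrite cards2; case: eqP => // /(congr1 val); rewrite /= parent_val.
  by have := odd_double_half x; rewrite -mul2n; lia.
by rewrite card_imset; [exact: E0_simple | exact: embed_inj].
Qed.

Lemma construction_weight_set2 (u v : V) : construction_weight [set u; v] =
  if (2 ^ d <= u) && (2 ^ d <= v) then 1
  else if (2 ^ d <= u) || (2 ^ d <= v) then k else 0.
Proof.
rewrite /construction_weight disjoints_subset !subUset !sub1set !inE.
by case: (2 ^ d <= u); case: (2 ^ d <= v).
Qed.

Section Fault.
Variables (a0 b0 : 'I_eta).
Hypotheses (a0b0 : a0 != b0) (a0b0_E0 : [set a0; b0] \in E0)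
  (girth_E0 : girth_eq E0 (2 * k + 2)).

Local Notation a := (embed a0 : nat).
Local Notation on_path := (on_root_path d a).

Lemma leaf_a : 2 ^ d <= a.
Proof. by rewrite embed_val leq_addr. Qed.

Lemma a_lt : a < 2 ^ d.+1.
Proof. exact: vertex_lt. Qed.

Definition fault_set : {set {set V}} :=
  [set [set z; parent z] | z : V & [&& 1 < z, ~~ on_path z & on_path z./2]].

(* Leaves outside the copy of G0 are isolated; they get the default value. *)
Definition leaf_hops (t : nat) : nat :=
  if insub t is Some v then capped_hops (adj (E0 :\ [set a0; b0])) a0 (2 * k + 1) v
  else 2 * k + 1.

Definition fault_potential (x : V) : nat :=
  if 2 ^ d <= x then k + leaf_hops (x - 2 ^ d)
  else if on_path x then 0 else 2 * k + 1.

Lemma leaf_hops_le (t : nat) : leaf_hops t <= 2 * k + 1.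
Proof. by rewrite /leaf_hops; case: insubP => // v _ _; exact: capped_hops_le. Qed.

Lemma leaf_hops_gt0 (t : nat) : t != a0 -> 0 < leaf_hops t.
Proof.
rewrite /leaf_hops; case: insubP => [v _ vt|_ _]; last by rewrite addn1.
move=> ta0; apply: capped_hops_gt0; rewrite ?addn1 //.
by apply: contraNneq ta0 => <-; rewrite -vt.
Qed.

Lemma fault_potential_embed v :
  fault_potential (embed v) = k + capped_hops (adj (E0 :\ [set a0; b0])) a0 (2 * k + 1) v.
Proof. by rewrite /fault_potential embed_val leq_addr addKn /leaf_hops valK. Qed.

Lemma fault_potential_root : fault_potential root = 0.
Proof.
rewrite /fault_potential root_val ifF ?(on_root_path_root d_gt0 leaf_a a_lt) //.
by apply/negbTE; rewrite -ltnNge -{1}(expn0 2) ltn_exp2l.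
Qed.

Lemma fault_potential_b0 : fault_potential (embed b0) = 3 * k + 1.
Proof.
rewrite fault_potential_embed capped_hops_far; first lia.
move=> p a0p pb0; have := girth_le_detour girth_E0 a0b0 a0b0_E0 a0p pb0.
by rewrite addn2 addn1 ltnS.
Qed.

Lemma fault_potential_tree_lip (z : V) : 1 < z -> [set z; parent z] \notin fault_set ->
  fault_potential z <= fault_potential (parent z) + construction_weight [set z; parent z] /\
  fault_potential (parent z) <= fault_potential z + construction_weight [set z; parent z].
Proof.
move=> z_gt1 z_unfaulted.
have path_half : on_path z -> on_path z./2.
  by move=> z_on; exact: (on_root_path_half d_gt0 leaf_a a_lt z_on z_gt1).
have not_fault : ~~ on_path z -> on_path z./2 -> False.
  move=> z_off z2_on; move/negP: z_unfaulted; apply; apply/imsetP; exists z => //.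
  by rewrite inE z_gt1 z_off z2_on.
rewrite construction_weight_set2 parent_val (leqNgt _ z./2) parent_lt andbF orbF.
rewrite /fault_potential parent_val (leqNgt _ z./2) parent_lt /=.
case: ifP => leaf_z; last first.
  case: (boolP (on_path z)) => [z_on|z_off]; first by rewrite path_half.
  by case: (boolP (on_path z./2)) => z2_on; [case: (not_fault z_off z2_on) | rewrite addn0].
case: (boolP (on_path z./2)) => z2_on.
  case: (boolP (on_path z)) => [z_on|z_off]; last by case: (not_fault z_off z2_on).
  have -> : (z : nat) = a := on_root_path_leafE d_gt0 leaf_a a_lt leaf_z z_on.
  by rewrite embed_val addKn /leaf_hops valK capped_hops_source; lia.
have z_a : (z : nat) != a.
  have a_gt1 : 1 < a by apply: leq_trans leaf_a; rewrite -{1}(expn0 2) ltn_exp2l.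
  apply: contraNneq z2_on => ->.
  exact: (on_root_path_half d_gt0 leaf_a a_lt (on_root_path_leaf _ _) a_gt1).
have := leaf_hops_le (z - 2 ^ d); have : 0 < leaf_hops (z - 2 ^ d).
  by apply: leaf_hops_gt0; apply: contra z_a => /eqP e; rewrite embed_val -e subnKC.
lia.
Qed.

Lemma fault_potential_lip (u v : V) : [set u; v] \in construction_edges ->
  [set u; v] \notin fault_set -> [set u; v] != [set embed a0; embed b0] ->
  fault_potential v <= fault_potential u + construction_weight [set u; v].
Proof.
case/setUP => [/imsetP[z /[!inE] z_gt1 uv_z]|/imsetP[e e_E0 uv_e]] uv_unfaulted uv_ab.
  have [] := fault_potential_tree_lip z_gt1; first by rewrite -uv_z.
  by rewrite uv_z; case: (set2_eq_cases uv_z) => -[-> ->].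
have /cards2P[p [q [pq e_pq]]] : #|e| == 2 by rewrite E0_simple.
move: uv_e; rewrite e_pq imsetU1 imset_set1 => uv_pq.
have pq_adj : adj (E0 :\ [set a0; b0]) p q.
  rewrite /adj !inE -e_pq e_E0 andbT; apply: contra uv_ab => /eqP pq_ab.
  rewrite uv_pq; rewrite e_pq in pq_ab.
  by case: (set2_eq_cases pq_ab) => -[-> ->]; rewrite // setUC.
rewrite uv_pq construction_weight_set2 !embed_val !leq_addr /=.
case: (set2_eq_cases uv_pq) => -[-> ->]; rewrite !fault_potential_embed.
  by have := capped_hops_step a0 (2 * k + 1) pq_adj; lia.
by rewrite adjC in pq_adj; have := capped_hops_step a0 (2 * k + 1) pq_adj; lia.
Qed.

Lemma fault_set_sub : fault_set \subset construction_edges.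
Proof.
apply/subsetP => _ /imsetP[z z_in ->]; apply: tree_edge_mem.
by move: z_in; rewrite inE => /and3P[].
Qed.

Lemma card_fault_set : #|fault_set| <= d.
Proof.
pose side_edge (j : 'I_d) : {set V} :=
  [set inord (sibling (a %/ 2 ^ j)); inord (a %/ 2 ^ j.+1)].
apply: leq_trans (_ : #|[set side_edge j | j : 'I_d]| <= _); last first.
  by apply: leq_trans (leq_imset_card _ _) _; rewrite card_ord.
apply/subset_leq_card/subsetP => _ /imsetP[z /[!inE] /and3P[z_gt1 z_off z2_on] ->].
have [j [z_sib z_half]] := off_root_path_child leaf_a (vertex_lt z) z_gt1 z_off z2_on.
by apply/imsetP; exists j => //; rewrite /side_edge -z_sib -z_half inord_val.
Qed.

Definition ancestor_vertex (j : nat) : V := inord (a %/ 2 ^ j).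

Lemma ancestor_vertex_val j : ancestor_vertex j = a %/ 2 ^ j :> nat.
Proof. by rewrite inordK // (leq_ltn_trans (leq_div _ _) (ltn_ord _)). Qed.

Lemma root_path_edge j : j < d ->
  [set ancestor_vertex j.+1; ancestor_vertex j] \in construction_edges :\: fault_set.
Proof.
move=> jd; set z := ancestor_vertex j.
have z_half : z./2 = a %/ 2 ^ j.+1 by rewrite ancestor_vertex_val ancestorS.
have -> : [set ancestor_vertex j.+1; z] = [set z; parent z].
  by rewrite setUC /parent z_half.
have z_gt1 : 1 < z.
  rewrite ancestor_vertex_val; apply: leq_trans (ancestor_ge leaf_a (ltnW jd)).
  by rewrite -{1}(expn1 2) leq_exp2l // subn_gt0.
rewrite in_setD tree_edge_mem // andbT.
apply/imsetP => -[y /[!inE] /and3P[_ y_off _] /set2_eq_cases[][z_y y_z]]; apply/negP: y_off.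
  by rewrite -z_y ancestor_vertex_val on_root_path_ancestor // ltnW.
by rewrite -y_z parent_val z_half on_root_path_ancestor.
Qed.

Lemma root_path_edge_weight j : j < d ->
  construction_weight [set ancestor_vertex j.+1; ancestor_vertex j] = if j == 0 then k else 0.
Proof.
move=> jd; rewrite construction_weight_set2 !ancestor_vertex_val.
rewrite [2 ^ d <= _ %/ 2 ^ j.+1]leqNgt ancestor_internal ?andbF ?orbF ?leaf_a ?a_lt //=.
case: j jd => [|j] jd; first by rewrite expn0 divn1 leaf_a.
by rewrite leqNgt ancestor_internal ?leaf_a ?a_lt // ltnW.
Qed.

Lemma copy_edge_unfaulted : [set embed a0; embed b0] \in construction_edges :\: fault_set.
Proof.
rewrite in_setD copy_edge_mem // andbT.
apply/imsetP => -[z _ /set2_eq_cases[[_ b_pz]|[a_pz _]]];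
  by have := parent_lt z; rewrite -parent_val -?b_pz -?a_pz embed_val ltnNge leq_addr.
Qed.

Lemma descent_walk (R : realType) j : j <= d -> exists p,
  [/\ path (adj (construction_edges :\: fault_set)) (ancestor_vertex j) p,
      last (ancestor_vertex j) p = embed b0 &
      walk_len (fun e => (construction_weight e)%:R%R : R) (ancestor_vertex j) p =
        ((if j == 0 then 1 else k + 1)%N%:R)%R].
Proof.
elim: j => [_|j IHj jd].
  exists [:: embed b0]; rewrite /ancestor_vertex expn0 divn1 inord_val /= andbT.
  split => //; first exact: copy_edge_unfaulted.
  by rewrite /walk_len /= big_seq1 construction_weight_set2 !embed_val !leq_addr.
have [p [path_p last_p len_p]] := IHj (ltnW jd).
exists (ancestor_vertex j :: p); split => //=.
  by rewrite path_p andbT; exact: root_path_edge.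
rewrite /walk_len /= big_cons -/(walk_len _ _ p) len_p root_path_edge_weight //.
by case: j {IHj jd path_p last_p len_p} => [|j] /=; rewrite ?natrD ?add0r // addrC.
Qed.

Lemma copy_edge_in_spanner (R : realType) (f : nat) (sigma : R) (H : {set {set V}}) :
  d <= f -> (1 <= sigma)%R -> (sigma < (3 * k + 1)%:R / (k + 1)%:R)%R ->
  is_EFT_ASPT construction_edges (fun e => (construction_weight e)%:R%R) root f sigma H ->
  [set embed a0; embed b0] \in H.
Proof.
move=> df sigma_ge1 sigma_lt [H_sub H_spanner]; apply/contraT => ab_notin_H.
set w := fun e => (construction_weight e)%:R%R : R.
have dist_G : (dist (construction_edges :\: fault_set) w root (embed b0) <= (k + 1)%:R%:E)%E.
  have [p [root_p p_b0 len_p]] := descent_walk R (leqnn d).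
  rewrite /ancestor_vertex ancestor_root ?leaf_a ?a_lt // -/root in root_p p_b0 len_p.
  rewrite (gtn_eqF d_gt0) in len_p; rewrite -len_p dist_le_walk_len //.
  by rewrite /is_walk root_p p_b0 eqxx.
have dist_H : ((3 * k + 1)%:R%:E <= dist (H :\: fault_set) w root (embed b0))%E.
  have lip u v : adj (H :\: fault_set) u v ->
      ((fault_potential v)%:R <= (fault_potential u)%:R + w [set u; v])%R.
    rewrite /adj in_setD => /andP[uv_unfaulted uv_H]; rewrite -natrD ler_nat.
    apply: fault_potential_lip => //; first exact: (subsetP H_sub).
    by apply: contraNneq ab_notin_H => <-.
  by have := potential_le_dist lip root (embed b0);
    rewrite fault_potential_b0 fault_potential_root subr0.
have := H_spanner _ fault_set_sub (leq_trans card_fault_set df) (embed b0).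
move=> /(le_trans dist_H) /le_trans /(_ (lee_wpmul2l _ dist_G)).
rewrite lee_fin (le_trans _ sigma_ge1) // -EFinM lee_fin => /(_ isT).
move: sigma_lt; rewrite ltr_pdivlMr ?ltr0n ?addn1 // => /lt_le_trans /[apply].
by rewrite ltxx.
Qed.
End Fault.

Lemma card_spanner_ge (R : realType) (f : nat) (sigma : R) (H : {set {set V}}) :
  girth_eq E0 (2 * k + 2) -> d <= f ->
  (1 <= sigma)%R -> (sigma < (3 * k + 1)%:R / (k + 1)%:R)%R ->
  is_EFT_ASPT construction_edges (fun e => (construction_weight e)%:R%R) root f sigma H ->
  #|E0| <= #|H|.
Proof.
move=> girth_E0 df sigma_ge1 sigma_lt spanner.
have copy_sub : copy_edges \subset H.
  apply/subsetP => _ /imsetP[e e_E0 ->].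
  have /cards2P[u [v [uv e_uv]]] : #|e| == 2 by rewrite E0_simple.
  rewrite e_uv imsetU1 imset_set1.
  by apply: (copy_edge_in_spanner uv _ girth_E0 df sigma_ge1 sigma_lt spanner); rewrite -e_uv.
apply: leq_trans (subset_leq_card copy_sub).
by rewrite card_imset //; exact: imset_inj embed_inj.
Qed.
End Construction.

Lemma exp2_bracket (eta : nat) :
  1 < eta -> exists d, [/\ 0 < d, eta <= 2 ^ d & 2 ^ d.+1 <= 4 * eta].
Proof.
move=> eta_gt1; have /andP[] := up_log_bounds (isT : 1 < 2) eta_gt1.
have := up_log_gt0 2 eta; rewrite eta_gt1 /=.
case: (up_log 2 eta) => // d _ eta_gt eta_le.
by exists d.+1; split => //; move: eta_gt; rewrite /= !expnS; lia.
Qed.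

Local Open Scope ring_scope.

Lemma log2_exp2n (R : realType) (n : nat) : log2 ((2 ^ n)%N%:R : R) = n%:R.
Proof.
rewrite /log2 natrX lnXn ?ltr0n // -[ln _ *+ n]mulr_natl mulfK //.
by apply/lt0r_neq0/ln_gt0; rewrite ltr1n.
Qed.

Lemma powR_le_mul4 (R : realType) (x y : nat) (p : R) :
  (x <= 4 * y)%N -> 0 <= p <= 2 -> powR (x%:R : R) p <= 16 * powR (y%:R) p.
Proof.
move=> xy /andP[p_ge0 p_le2].
apply: (@le_trans _ _ (powR ((4 * y)%N%:R) p)).
  by apply: ge0_ler_powR => //; rewrite ?nnegrE ?ler0n // ler_nat.
rewrite natrM powRM ?ler0n // ler_wpM2r ?powR_ge0 //.
apply: le_trans (ler_powR _ p_le2) _; first by rewrite ler1n.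
by rewrite powR_mulrn ?ler0n // -natrX.
Qed.

Unset Implicit Arguments.

Theorem mainTheorem8 (R : realType) :
  (forall k : nat, (1 <= k)%N -> erdos_girth_conjecture R k) ->
  forall k : nat, (1 <= k)%N ->
  exists c : R, 0 < c /\
    forall N : nat, exists n : nat, (N <= n)%N /\
      exists (E : {set {set 'I_n}}) (w : {set 'I_n} -> R) (s : 'I_n),
        [/\ simple_graph E, (forall e, e \in E -> 0 <= w e) &
          forall (f : nat) (sigma : R) (H : {set {set 'I_n}}),
            log2 (n%:R : R) <= f%:R ->
            1 <= sigma ->
            sigma < (3 * k + 1)%:R / (k + 1)%:R ->
            is_EFT_ASPT E w s f sigma H ->
            c * powR (n%:R) (1 + k%:R^-1) <= #|H|%:R].
Proof.
move=> girth_conj k k_ge1; have [c [c_gt0 dense]] := girth_conj k k_ge1.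
exists (c / 16); split => [|N]; first by rewrite divr_gt0.
have [eta [N_le_eta [E0 [E0_simple girth_E0 card_E0]]]] := dense (maxn N 2).
have [d [d_gt0 eta_le n_le]] := exp2_bracket (leq_trans (leq_maxr N 2) N_le_eta).
set m := (2 ^ d.+1).-1.
have card_V : m.+1 = (2 ^ d.+1)%N by rewrite prednK // expn_gt0.
exists m.+1; split.
  rewrite card_V (leq_trans (leq_maxl N 2)) // (leq_trans N_le_eta) //.
  by rewrite (leq_trans eta_le) // leq_exp2l.
exists (construction_edges d m E0), (fun e => (construction_weight k d e)%:R), (root m).
split=> [|e _|f sigma H log_le_f sigma_ge1 sigma_lt spanner].
- exact: construction_simple.
- by rewrite ler0n.
have d_le_f : (d <= f)%N.
  by move: log_le_f; rewrite card_V log2_exp2n ler_nat; exact: leq_trans.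
have card_H := card_spanner_ge d_gt0 card_V eta_le E0_simple girth_E0
  d_le_f sigma_ge1 sigma_lt spanner.
have exp_bounds : 0 <= (1 + k%:R^-1 : R) <= 2.
  by rewrite addr_ge0 ?invr_ge0 //= -[2]/(1 + 1) lerD2l invf_le1 ?ler1n ?ltr0n.
rewrite -card_V in n_le.
apply: le_trans (ler_wpM2l _ (powR_le_mul4 n_le exp_bounds)) _.
  by rewrite divr_ge0 // ltW.
rewrite mulrA divfK //; apply: le_trans card_E0 _.
by rewrite ler_nat.
Qed.
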